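(* Let $(\Lambda,d)$ be a finitely aligned $k$-graph. Then $S_\Lambda$, with the multiplication $FG:=\bigcup_{(\lambda,\mu)\in F,(\xi,\eta)\in G}\{(\lambda\alpha,\eta\beta):(\alpha,\beta)\in\Lambda^{\min}(\mu,\xi)\}$, is an inverse semigroup, with involution given by $F^*:=\{(\mu,\lambda):(\lambda,\mu)\in F\}$; that is, for each $F\in S_\Lambda$, $F^*$ is the unique $G\in S_\Lambda$ with $FGF=F$ and $GFG=G$.
   Context: A $k$-graph $(\Lambda,d)$ is a countable small category $\Lambda$ (objects identified with identity morphisms) with a functor $d:\Lambda\to\mathbb N^k$ satisfying unique factorization: whenever $d(\lambda)=m+n$ there are unique $\mu,\nu$ with $d(\mu)=m$, $d(\nu)=n$, $\lambda=\mu\nu$. $r,s$ are range/source. $\Lambda^{\min}(\lambda,\mu)=\{(\alpha,\beta):\lambda\alpha=\mu\beta,\ d(\lambda\alpha)=d(\lambda)\vee d(\mu)\}$ ($\vee$ coordinatewise max); finitely aligned means all these sets are finite. $\Lambda*_s\Lambda=\{(\lambda,\mu):s(\lambda)=s(\mu)\}$. $S_\Lambda$ is the collection of finite $F\subseteq\Lambda*_s\Lambda$ such that distinct $(\lambda,\mu),(\nu,\omega)\in F$ satisfy $\Lambda^{\min}(\lambda,\nu)=\emptyset$ and $\Lambda^{\min}(\mu,\omega)=\emptyset$; the given product is an associative operation on $S_\Lambda$. *)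

From mathcomp Require Import all_boot.
From mathcomp Require Import boolp classical_sets cardinality.
Set Implicit Arguments. Unset Strict Implicit. Unset Printing Implicit Defensive.
Local Open Scope classical_set_scope.

(* A k-graph (Lambda, d): a countable small category whose objects are
   identified with identity morphisms, with a degree functor d : Lambda -> N^k
   (degrees are functions 'I_k -> nat with pointwise operations) satisfying
   unique factorisation.  Composition is partial: [comp l m = Some n] means
   l m is defined (s(l) = r(m)) and equals n. *)
Record kgraph (k : nat) := KGraph {
  Mor : countType;
  rng : Mor -> Mor;
  src : Mor -> Mor;
  comp : Mor -> Mor -> option Mor;
  deg : Mor -> 'I_k -> nat;
  rng_rng : forall l, rng (rng l) = rng l;
  src_rng : forall l, src (rng l) = rng l;
  rng_src : forall l, rng (src l) = src l;
  src_src : forall l, src (src l) = src l;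
  comp_defined : forall l m, src l = rng m -> exists n, comp l m = Some n;
  comp_dom : forall l m n, comp l m = Some n ->
    [/\ src l = rng m, rng n = rng l & src n = src m];
  comp_idl : forall l, comp (rng l) l = Some l;
  comp_idr : forall l, comp l (src l) = Some l;
  comp_assoc : forall a b c ab bc, comp a b = Some ab -> comp b c = Some bc ->
    comp ab c = comp a bc;
  deg_comp : forall l m n, comp l m = Some n ->
    forall i, deg n i = deg l i + deg m i;
  unique_fact : forall l (m n : 'I_k -> nat), (forall i, deg l i = m i + n i) ->
    exists! p : Mor * Mor,
      [/\ forall i, deg p.1 i = m i, forall i, deg p.2 i = n i
        & comp p.1 p.2 = Some l]
}.

Section KGraphDefs.
Variables (k : nat) (L : kgraph k).
Local Notation M := (Mor L).
Local Notation d := (@deg k L).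

Definition Lmin (l m : M) : set (M * M) :=
  [set p | exists n, [/\ comp l p.1 = Some n, comp m p.2 = Some n &
                         forall i, d n i = maxn (d l i) (d m i)]].

Definition finitely_aligned : Prop := forall l m : M, finite_set (Lmin l m).

Definition S_Lambda : set (set (M * M)) :=
  [set F | [/\ finite_set F,
              (forall p, F p -> src p.1 = src p.2) &
              (forall p q, F p -> F q -> p <> q ->
                 Lmin p.1 q.1 = set0 /\ Lmin p.2 q.2 = set0)]].

Definition Smul (F G : set (M * M)) : set (M * M) :=
  [set p | exists l m x e a b,
     [/\ F (l, m), G (x, e), Lmin m x (a, b),
         comp l a = Some p.1 & comp e b = Some p.2]].

Definition Sstar (F : set (M * M)) : set (M * M) := [set p | F (p.2, p.1)].

End KGraphDefs.

Arguments Lmin {k} L _ _.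
Arguments finitely_aligned {k} L.
Arguments S_Lambda {k} L.
Arguments Smul {k L} F G.
Arguments Sstar {k L} F.

(* Each F in S_Lambda acts on Lambda as the partial map [m g |-> l g], for
   (l, m) in F.  The disjointness conditions make this relation functional and
   injective, unique factorisation makes the action faithful on S_Lambda, and
   Lambda^min(m, x) parametrises exactly the common extensions of m and x, so
   the action turns the product FG into composition of partial maps and F^*
   into the inverse map.  Associativity and the inverse-semigroup laws are
   then inherited from the inverse semigroup of partial bijections. *)
From Pilot Require Import Defs.
From mathcomp Require Import all_boot.
From mathcomp Require Import boolp classical_sets cardinality.
From mathcomp Require Import zify.
Local Open Scope classical_set_scope.
Set Implicit Arguments. Unset Strict Implicit. Unset Printing Implicit Defensive.

Section KGraphFactorisation.
Variables (k : nat) (L : kgraph k).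
Local Notation M := (Mor L).
Local Notation cmp := (@Defs.comp k L).
Local Notation deg := (@deg k L).

Lemma factor_exists (n : M) (u v : 'I_k -> nat) :
  (forall i, deg n i = u i + v i) ->
  exists a b, [/\ deg a =1 u, deg b =1 v & cmp a b = Some n].
Proof.
by move=> duv; have [[a b] [[/= da db ab] _]] := unique_fact duv; exists a, b.
Qed.

Lemma factor_uniq (a b a' b' n : M) :
  cmp a b = Some n -> cmp a' b' = Some n -> deg a =1 deg a' -> a = a' /\ b = b'.
Proof.
move=> abn abn' da.
have db : deg b =1 deg b'.
  by move=> i; have := deg_comp abn i; have := deg_comp abn' i; rewrite da; lia.
have [p [_ uniq_p]] := unique_fact (deg_comp abn).
have := uniq_p (a', b') (And3 (fun i => esym (da i)) (fun i => esym (db i)) abn').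
by rewrite (uniq_p (a, b) (And3 (fun _ => erefl) (fun _ => erefl) abn)) => -[].
Qed.

Lemma comp_cancel (a b c n : M) : cmp a b = Some n -> cmp a c = Some n -> b = c.
Proof. by move=> abn acn; case: (factor_uniq abn acn (fun _ => erefl)). Qed.

Lemma deg_src (l : M) i : deg (src l) i = 0.
Proof. by have := deg_comp (comp_idr l) i; lia. Qed.

Lemma comp_deg0 (a g n : M) : cmp a g = Some n -> (forall i, deg g i = 0) -> n = a.
Proof.
move=> agn g0; suff dn : deg n =1 deg a by case: (factor_uniq (comp_idr n) agn dn).
by move=> i; have := deg_comp agn i; rewrite g0; lia.
Qed.

Lemma comp_assocl (a b c ab abc : M) :
  cmp a b = Some ab -> cmp ab c = Some abc ->
  exists2 bc, cmp b c = Some bc & cmp a bc = Some abc.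
Proof.
move=> Hab Habc; have [_ _ src_ab] := comp_dom Hab; have [src_c _ _] := comp_dom Habc.
have [bc Hbc] := comp_defined (etrans (esym src_ab) src_c).
by exists bc; rewrite // -(comp_assoc Hab Hbc).
Qed.

Lemma comp_assoc_ex (a b c ab bc : M) :
  cmp a b = Some ab -> cmp b c = Some bc ->
  exists abc, cmp ab c = Some abc /\ cmp a bc = Some abc.
Proof.
move=> Hab Hbc; have [src_a _ _] := comp_dom Hab; have [_ rng_bc _] := comp_dom Hbc.
have [abc Habc] := comp_defined (etrans src_a (esym rng_bc)).
by exists abc; rewrite (comp_assoc Hab Hbc).
Qed.

Lemma comp_src (a b ab : M) : cmp a b = Some ab -> src ab = src b.
Proof. by case/comp_dom. Qed.

Lemma comp_assocr (a b c bc abc : M) :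
  cmp b c = Some bc -> cmp a bc = Some abc ->
  exists2 ab, cmp a b = Some ab & cmp ab c = Some abc.
Proof.
move=> Hbc Habc; have [_ rng_bc _] := comp_dom Hbc; have [src_a _ _] := comp_dom Habc.
have [ab Hab] := comp_defined (etrans src_a rng_bc).
by exists ab; rewrite // (comp_assoc Hab Hbc).
Qed.

Lemma Lmin_sym (m x a b : M) : Lmin L m x (a, b) -> Lmin L x m (b, a).
Proof. by move=> [n [ma xb dn]]; exists n; split=> // i; rewrite maxnC. Qed.

Lemma Lmin_factor (m x g h n : M) :
  cmp m g = Some n -> cmp x h = Some n ->
  exists a b e, [/\ Lmin L m x (a, b), cmp a e = Some g & cmp b e = Some h].
Proof.
move=> mgn xhn; pose D i := maxn (deg m i) (deg x i).
have [c [e [dc _ ce]]] := @factor_exists n D (fun i => deg n i - D i)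
  (fun i => ltac:(have := deg_comp mgn i; have := deg_comp xhn i; rewrite /D; lia)).
have [m' [a [dm' _ m'a]]] := @factor_exists c (deg m) (fun i => D i - deg m i)
  (fun i => ltac:(rewrite dc /D; lia)).
have [x' [b [dx' _ x'b]]] := @factor_exists c (deg x) (fun i => D i - deg x i)
  (fun i => ltac:(rewrite dc /D; lia)).
have [g' ae m'g'] := comp_assocl m'a ce; have [h' be x'h'] := comp_assocl x'b ce.
have [<- <-] := factor_uniq m'g' mgn dm'; have [<- <-] := factor_uniq x'h' xhn dx'.
by exists a, b, e; split=> //; exists c; split=> // i; rewrite dc dm' dx'.
Qed.

Lemma Lmin_uniq (m x a b a' b' g h y : M) :
  Lmin L m x (a, b) -> Lmin L m x (a', b') ->
  cmp a g = Some y -> cmp a' h = Some y -> [/\ a = a', b = b' & g = h].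
Proof.
move=> [c [/= ma xb dc]] [c' [/= ma' xb' dc']] agy a'hy.
have da : deg a =1 deg a'.
  move=> i; have := deg_comp ma i; have := deg_comp ma' i.
  by rewrite dc dc'; lia.
have [aa' gh] := factor_uniq agy a'hy da; subst a' h.
move: ma'; rewrite ma => -[cc']; split=> //.
by apply: comp_cancel xb _; rewrite cc'.
Qed.

End KGraphFactorisation.

Section SLambda.
Variables (k : nat) (L : kgraph k).
Local Notation M := (Mor L).
Local Notation cmp := (@Defs.comp k L).
Implicit Types (F G H : set (M * M)) (p q : M * M).

Lemma S_Lambda_ext_fst F p q (g h n : M) :
  S_Lambda L F -> F p -> F q -> cmp p.1 g = Some n -> cmp q.1 h = Some n -> p = q.
Proof.
move=> [_ _ disj] Fp Fq pg qh; apply: contrapT => pq.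
have [a [b [e [+ _ _]]]] := Lmin_factor pg qh.
by rewrite (disj _ _ Fp Fq pq).1.
Qed.

Lemma S_Lambda_ext_snd F p q (g h n : M) :
  S_Lambda L F -> F p -> F q -> cmp p.2 g = Some n -> cmp q.2 h = Some n -> p = q.
Proof.
move=> [_ _ disj] Fp Fq pg qh; apply: contrapT => pq.
have [a [b [e [+ _ _]]]] := Lmin_factor pg qh.
by rewrite (disj _ _ Fp Fq pq).2.
Qed.

Definition Srel F (x y : M) : Prop :=
  exists l m g, [/\ F (l, m), cmp m g = Some x & cmp l g = Some y].

Lemma Srel_pair F (l m : M) : S_Lambda L F -> F (l, m) -> Srel F m l.
Proof.
move=> [_ src_eq _] Flm; exists l, m, (src m); split=> //; first exact: comp_idr.
by rewrite -(src_eq _ Flm); apply: comp_idr.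
Qed.

Lemma Srel_functional F (x y y' : M) :
  S_Lambda L F -> Srel F x y -> Srel F x y' -> y = y'.
Proof.
move=> SF [l [m [g [Flm mg lg]]]] [l' [m' [g' [Flm' mg' lg']]]].
have [? ?] := S_Lambda_ext_snd SF Flm Flm' mg mg'; subst l' m'.
by move: lg'; rewrite -(comp_cancel mg mg') lg => -[].
Qed.

Lemma Srel_injective F (x x' y : M) :
  S_Lambda L F -> Srel F x y -> Srel F x' y -> x = x'.
Proof.
move=> SF [l [m [g [Flm mg lg]]]] [l' [m' [g' [Flm' mg' lg']]]].
have [? ?] := S_Lambda_ext_fst SF Flm Flm' lg lg'; subst l' m'.
by move: mg'; rewrite -(comp_cancel lg lg') mg => -[].
Qed.

Lemma Srel_star F (x y : M) : Srel (Sstar F) x y <-> Srel F y x.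
Proof. by split=> -[l [m [g [Fml mg lg]]]]; exists m, l, g. Qed.

Lemma Srel_mul F G (x z : M) :
  Srel (Smul F G) x z <-> exists y, Srel G x y /\ Srel F y z.
Proof.
split.
  move=> [p1 [p2 [g [[l [m [x' [e [a [b [Flm Gx'e HL la eb]]]]]]] p2g p1g]]]].
  have [n [/= ma x'b _]] := HL.
  have [bg bg_def ebg] := comp_assocl eb p2g.
  have [ag ag_def lag] := comp_assocl la p1g.
  have [y [ng x'bg]] := comp_assoc_ex x'b bg_def.
  exists y; split; first by exists x', e, bg.
  by exists l, m, ag; split=> //; rewrite -(comp_assoc ma ag_def).
move=> [y [[x' [e [g1 [Gx'e eg1 x'g1]]]] [l [m [g2 [Flm mg2 lg2]]]]]].
have [a [b [c [HL ac bc]]]] := Lmin_factor mg2 x'g1.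
have [la Hla lac] := comp_assocr ac lg2; have [eb Heb ebc] := comp_assocr bc eg1.
by exists la, eb, c; split=> //; exists l, m, x', e, a, b.
Qed.

Lemma S_Lambda_Srel_sub F G :
  S_Lambda L F -> S_Lambda L G -> (forall x y, Srel F x y -> Srel G x y) ->
  (forall x y, Srel G x y -> Srel F x y) -> F `<=` G.
Proof.
move=> SF SG FG GF [l m] Flm.
have [xi [eta [g [Gxe eg xig]]]] := FG _ _ (Srel_pair SF Flm).
have [l' [m' [d [Flm' m'd l'd]]]] := GF _ _ (Srel_pair SG Gxe).
have [dg dg_def m'dg] := comp_assocl m'd eg.
have [? ?] := S_Lambda_ext_snd SF Flm Flm' (comp_idr m) m'dg; subst l' m'.
have g0 i : deg g i = 0.
  have := deg_comp dg_def i; rewrite -(comp_cancel (comp_idr m) m'dg) deg_src; lia.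
by rewrite (comp_deg0 eg g0) (comp_deg0 xig g0).
Qed.

Lemma S_Lambda_Srel_inj F G :
  S_Lambda L F -> S_Lambda L G -> (forall x y, Srel F x y <-> Srel G x y) -> F = G.
Proof.
move=> SF SG FG; apply/seteqP; split; apply: S_Lambda_Srel_sub => // x y; apply FG.
Qed.

Lemma SstarK F : Sstar (Sstar F) = F.
Proof. by apply/funext => -[]. Qed.

Lemma S_Lambda_star F : S_Lambda L F -> S_Lambda L (Sstar F).
Proof.
move=> [finF src_eq disj]; split.
- apply: (@sub_finite_set _ _ ((fun p => (p.2, p.1)) @` F)); last exact: finite_image.
  by move=> [p1 p2] Fp; exists (p2, p1).
- by move=> [p1 p2] Fp; rewrite /= (src_eq _ Fp).
- move=> [p1 p2] [q1 q2] Fp Fq pq.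
  have [] := disj _ _ Fp Fq; first by move=> -[e2 e1]; apply: pq; rewrite e1 e2.
  by move=> /= -> ->.
Qed.

Lemma Sstar_mul F G : Sstar (Smul F G) = Smul (Sstar G) (Sstar F).
Proof.
apply/funext => -[p1 p2]; apply/propext.
by split=> -[l [m [x [e [a [b [Flm Gxe /Lmin_sym HL la eb]]]]]]];
  exists e, x, m, l, b, a.
Qed.

Lemma Smul_ext_fst F G p q (g h n : M) :
  S_Lambda L F -> S_Lambda L G -> Smul F G p -> Smul F G q ->
  cmp p.1 g = Some n -> cmp q.1 h = Some n -> p = q.
Proof.
move=> SF SG [l [m [x [e [a [b [Flm Gxe HL la eb]]]]]]]
  [l' [m' [x' [e' [a' [b' [Flm' Gxe' HL' la' eb']]]]]]] pg qh.
have [ag ag_def lag] := comp_assocl la pg.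
have [ah ah_def lah] := comp_assocl la' qh.
have [? ?] := S_Lambda_ext_fst SF Flm Flm' lag lah; subst l' m'.
have ? := comp_cancel lag lah; subst ah.
have [c [/= ma xb _]] := HL; have [c' [/= ma' x'b' _]] := HL'.
have [y [cg may]] := comp_assoc_ex ma ag_def.
have [bg _ xbg] := comp_assocl xb cg.
have [bh _ x'bh] := comp_assocl x'b' (etrans (comp_assoc ma' ah_def) may).
have [? ?] := S_Lambda_ext_fst SG Gxe Gxe' xbg x'bh; subst x' e'.
have [? ? _] := Lmin_uniq HL HL' ag_def ah_def; subst a' b'.
by move: la eb la' eb'; case: p q {pg qh} => [p1 p2] [q1 q2] /= -> -> [->] [->].
Qed.

Lemma Smul_ext_snd F G p q (g h n : M) :
  S_Lambda L F -> S_Lambda L G -> Smul F G p -> Smul F G q ->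
  cmp p.2 g = Some n -> cmp q.2 h = Some n -> p = q.
Proof.
move=> SF SG FGp FGq pg qh.
have swap r : Smul F G r -> Smul (Sstar G) (Sstar F) (r.2, r.1).
  by rewrite -Sstar_mul; case: r.
have := Smul_ext_fst (S_Lambda_star SG) (S_Lambda_star SF) (swap _ FGp) (swap _ FGq) pg qh.
by case: p q {FGp FGq pg qh} => [? ?] [? ?] [-> ->].
Qed.

Hypothesis FA : finitely_aligned L.

Lemma S_Lambda_mul F G :
  S_Lambda L F -> S_Lambda L G -> S_Lambda L (Smul F G).
Proof.
move=> SF SG; have [finF _ _] := SF; have [finG _ _] := SG; split.
- pose f (u : (M * M) * (M * M)) (ab : M * M) :=
    (odflt ab.1 (cmp u.1.1 ab.1), odflt ab.2 (cmp u.2.2 ab.2)).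
  apply: (@sub_finite_set _ _ (\bigcup_(u in F `*` G) f u @` Lmin L u.1.2 u.2.1)).
    move=> [p1 p2] [l [m [x [e [a [b [Flm Gxe HL la eb]]]]]]].
    by exists ((l, m), (x, e)) => //; exists (a, b); rewrite //= /f /= la eb.
  apply: bigcup_finite; first exact: finite_setX.
  by move=> u _; apply/finite_image/FA.
- move=> p [l [m [x [e [a [b [_ _ [n [ma xb _]] la eb]]]]]]].
  by rewrite (comp_src la) (comp_src eb) -(comp_src ma) -(comp_src xb).
- move=> p q FGp FGq pq.
  split; apply/funext => -[c d]; apply/propext; split=> // -[n [pc qd _]];
    exfalso; apply: pq.
  + exact: Smul_ext_fst SF SG FGp FGq pc qd.
  + exact: Smul_ext_snd SF SG FGp FGq pc qd.
Qed.

Lemma Smul_assoc F G H :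
  S_Lambda L F -> S_Lambda L G -> S_Lambda L H ->
  Smul (Smul F G) H = Smul F (Smul G H).
Proof.
move=> SF SG SH; apply: S_Lambda_Srel_inj; try by repeat apply: S_Lambda_mul.
move=> x z; rewrite !Srel_mul; split.
- move=> [y [Hxy /Srel_mul [w [Gyw Fwz]]]].
  by exists w; split=> //; apply/Srel_mul; exists y.
- move=> [w [/Srel_mul [y [Hxy Gyw]] Fwz]].
  by exists y; split=> //; apply/Srel_mul; exists w.
Qed.

Lemma Smul_star_id F : S_Lambda L F -> Smul (Smul F (Sstar F)) F = F.
Proof.
move=> SF; have SsF := S_Lambda_star SF.
apply: S_Lambda_Srel_inj => //; first by do 2 apply: S_Lambda_mul => //.
move=> x z; rewrite Srel_mul; split.
- move=> [y [Fxy /Srel_mul [w [/Srel_star Fwy Fwz]]]].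
  by rewrite (Srel_injective SF Fxy Fwy).
- move=> Fxz; exists z; split=> //; apply/Srel_mul; exists x.
  by split=> //; apply/Srel_star.
Qed.

Lemma Srel_sandwich F G (x y : M) :
  S_Lambda L G -> Smul (Smul G F) G = G -> Srel G x y -> Srel F y x.
Proof.
move=> SG GFG Gxy; have := Gxy; rewrite -{1}GFG.
move=> /Srel_mul [c [Gxc /Srel_mul [e [Fce Gey]]]].
by rewrite -(Srel_functional SG Gxc Gxy) -(Srel_injective SG Gey Gxy).
Qed.

Lemma Sstar_uniq F G :
  S_Lambda L F -> S_Lambda L G ->
  Smul (Smul F G) F = F -> Smul (Smul G F) G = G -> G = Sstar F.
Proof.
move=> SF SG FGF GFG; apply: S_Lambda_Srel_inj => //; first exact: S_Lambda_star.
by move=> x y; rewrite Srel_star; split; apply: Srel_sandwich.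
Qed.

End SLambda.

Theorem proposition4p4 (k : nat) (hk : 0 < k) (L : kgraph k) :
  finitely_aligned L ->
  (* S_Lambda is closed under the product, which is associative *)
  (forall F G, S_Lambda L F -> S_Lambda L G -> S_Lambda L (Smul F G)) /\
  (forall F G H, S_Lambda L F -> S_Lambda L G -> S_Lambda L H ->
     Smul (Smul F G) H = Smul F (Smul G H)) /\
  (* inverse semigroup: F^* is the unique G in S_Lambda with FGF = F, GFG = G *)
  (forall F, S_Lambda L F ->
     [/\ S_Lambda L (Sstar F),
         Smul (Smul F (Sstar F)) F = F,
         Smul (Smul (Sstar F) F) (Sstar F) = Sstar F &
         forall G, S_Lambda L G -> Smul (Smul F G) F = F ->
           Smul (Smul G F) G = G -> G = Sstar F]).
Proof.
move=> FA; split; first by move=> F G; apply: S_Lambda_mul.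
split; first exact: Smul_assoc.
move=> F SF; split.
- exact: S_Lambda_star.
- exact: Smul_star_id.
- by have := Smul_star_id FA (S_Lambda_star SF); rewrite SstarK.
- by move=> G; apply: Sstar_uniq.
Qed.
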